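(* Run the Unbiased Space Saving sketch with $m$ bins on an i.i.d. stream of items drawn from a discrete distribution with probabilities $p_1 \ge p_2 \ge \cdots$. Let $\alpha = \sum_{j > m} p_j$. For any $\alpha' < \alpha$, with probability $1$, $\hat{N}_{min}(t) > \alpha' t / m$ for all sufficiently large $t$.
   Context: Unbiased Space Saving sketch with $m$ bins: maintain $m$ (item, count) pairs, counts initialized to $0$. For each new row with item $x_{new}$: if $x_{new}$ is a label, increment its count by $1$; otherwise choose a pair with the smallest count $\hat{N}_{min}$ (uniformly at random among all pairs sharing the smallest count), increment its count by $1$, and with probability $1/(\hat{N}_{min}+1)$ replace its label by $x_{new}$. $\hat{N}_{min}(t)$ is the smallest count among the $m$ pairs after $t$ rows have been processed. *)

From HB Require Import structures.
From mathcomp Require Import all_boot all_order all_algebra.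
From mathcomp Require Import all_classical all_reals all_analysis.
Set Implicit Arguments. Unset Strict Implicit. Unset Printing Implicit Defensive.
Import Order.TTheory GRing.Theory Num.Theory.
Local Open Scope classical_set_scope.
Local Open Scope ring_scope.

(* Items are natural numbers.  A sketch with m bins is a sequence of   *)
(* m pairs (label, count); a label is [Some x] for an item x, or [None] *)
(* for an (initially) unlabeled bin.                                   *)
(* The random choices of the algorithm are realized from two auxiliary *)
(* real numbers u v in [0,1): among the k bins with the smallest count *)
(* (listed in increasing position), the one of rank floor(u*k) is      *)
(* chosen (uniform among ties when u is uniform on [0,1)), and its     *)
(* label is replaced iff v < 1/(Nmin+1) (probability 1/(Nmin+1) when v  *)
(* is uniform on [0,1)).                                               *)

Definition uss_state := seq (option nat * nat).

Definition uss_init (m : nat) : uss_state := nseq m (None, 0%N).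

Definition uss_nmin (s : uss_state) : nat :=
  foldr minn (head 0%N (map snd s)) (map snd s).

Definition uss_step (R : realType) (s : uss_state) (x : nat) (u v : R)
  : uss_state :=
  let d := (None, 0%N) in
  if Some x \in map fst s then
    let i := index (Some x) (map fst s) in
    set_nth d s i ((nth d s i).1, (nth d s i).2.+1)
  else
    let nm := uss_nmin s in
    let tied := [seq i <- iota 0 (size s) | (nth d s i).2 == nm] in
    let i := nth 0%N tied (Num.truncn (u * (size tied)%:R)) in
    let lab := if v < (nm.+1%:R)^-1 then Some x else (nth d s i).1 in
    set_nth d s i (lab, nm.+1).

Fixpoint uss_run (R : realType) (m : nat) (x : nat -> nat) (u v : nat -> R)
  (t : nat) : uss_state :=
  match t with
  | 0 => uss_init m
  | t'.+1 => uss_step (uss_run m x u v t') (x t') (u t') (v t')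
  end.

Definition Nmin (R : realType) (m : nat) (x : nat -> nat) (u v : nat -> R)
  (t : nat) : nat := uss_nmin (uss_run m x u v t).

Definition mutually_independent (d : measure_display) (T : measurableType d)
  (R : realType) (P : probability T R)
  (X : nat -> T -> nat) (U V : nat -> T -> R) : Prop :=
  forall (F : seq nat) (A : nat -> set nat) (B C : nat -> set R),
    uniq F ->
    (forall t, measurable (B t)) -> (forall t, measurable (C t)) ->
    P (\bigcap_(t in [set` F])
         (X t @^-1` A t `&` U t @^-1` B t `&` V t @^-1` C t))
    = (\prod_(t <- F)
         (P (X t @^-1` A t) * P (U t @^-1` B t) * P (V t @^-1` C t)))%E.

Definition uniform01 (d : measure_display) (T : measurableType d)
  (R : realType) (P : probability T R) (W : T -> R) : Prop :=
  measurable_fun setT W /\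
  forall B : set R, measurable B ->
    P (W @^-1` B) = (@lebesgue_measure R) (B `&` `[0%R, 1%R])%classic.

(* Deterministically, the sketch after t rows has m bins with distinct labels
   and counts summing to t, each count being at most Nmin + 1 plus the number
   of occurrences of its label so far.  Hence at most m (Nmin + 1) rows carry
   an item that is not currently a label.  At most m of the items 0, ..., M - 1
   are labels, so as p is nonincreasing the others have total probability at
   least sum_(m <= j < M) p j, which exceeds alpha' for M large.  A Chernoff
   bound and Borel-Cantelli show that almost surely every item j eventually
   occurs more than (p j - eps) t times among the first t rows, whence
   m (Nmin t + 1) >= c t for some c > alpha' and all large t. *)

From HB Require Import structures.
From mathcomp Require Import all_boot all_order all_algebra.
From mathcomp Require Import all_classical all_reals all_analysis.
From mathcomp Require Import zify ring lra.
Set Implicit Arguments.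
Unset Strict Implicit.
Unset Printing Implicit Defensive.
Import Order.TTheory GRing.Theory Num.Theory.
Local Open Scope classical_set_scope.
Local Open Scope ring_scope.

Section SetNth.
Variables (A : Type) (x0 : A).

Lemma map_set_nth (B : Type) (f : A -> B) (s : seq A) i y : (i < size s)%N ->
  map f (set_nth x0 s i y) = set_nth (f x0) (map f s) i (f y).
Proof. by elim: s i => [|a s IH] [|i] //= Hi; rewrite IH. Qed.

Lemma all_set_nth (P : pred A) (s : seq A) i y : (i < size s)%N ->
  all P s -> P y -> all P (set_nth x0 s i y).
Proof.
elim: s i => [|a s IH] [|i] //= Hi /andP[Pa Ps] Py; first by rewrite Py.
by rewrite Pa IH.
Qed.

Lemma set_nth_id (s : seq A) i : (i < size s)%N -> set_nth x0 s i (nth x0 s i) = s.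
Proof. by elim: s i => [|a s IH] [|i] //= Hi; rewrite IH. Qed.

End SetNth.

Lemma count_set_nth_fresh (L : seq (option nat)) i a : (i < size L)%N ->
  Some a \notin L -> (forall b, count_mem (Some b) L <= 1)%N ->
  forall b, (count_mem (Some b) (set_nth None L i (Some a)) <= 1)%N.
Proof.
move=> Hi aL L1 b; rewrite count_set_nth_ltn //=.
have [<-|ab] := eqVneq a b; last first.
  rewrite (inj_eq Some_inj) (negbTE ab) addn0 leq_subLR.
  exact: leq_trans (L1 b) (leq_addl _ _).
by move/count_memPn: aL => ->; rewrite eqxx leq_subLR leq_addl.
Qed.

(** * Invariant of the sketch *)

Lemma foldr_minn_le (L : seq nat) h y : y \in L -> (foldr minn h L <= y)%N.
Proof.
elim: L => [|a L IH] //=; rewrite in_cons => /orP[/eqP ->|/IH H].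
  exact: geq_minl.
exact: leq_trans (geq_minr _ _) H.
Qed.

Lemma foldr_minn_mem (L : seq nat) h : foldr minn h L \in h :: L.
Proof.
elim: L => [|a L IH] /=; first by rewrite mem_seq1.
rewrite /minn; case: ifP => _; first by rewrite !in_cons eqxx orbT.
by move: IH; rewrite !in_cons => /orP[->|->]; rewrite ?orbT.
Qed.

Lemma uss_nmin_le (s : uss_state) b : b \in s -> (uss_nmin s <= b.2)%N.
Proof. by move=> bs; apply/foldr_minn_le/map_f. Qed.

Lemma uss_nmin_mem (s : uss_state) : s != [::] -> uss_nmin s \in map snd s.
Proof.
case: s => [//|b s] _; rewrite /uss_nmin /= /minn.
by case: ifP => _; [exact: mem_head | exact: foldr_minn_mem].
Qed.

Lemma uss_nmin_ge (s : uss_state) k : s != [::] ->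
  all (fun b => k <= b.2)%N s -> (k <= uss_nmin s)%N.
Proof. by move=> /uss_nmin_mem /mapP[b bs ->] /allP; apply. Qed.

Definition occ (x : nat -> nat) (t : nat) (l : option nat) : nat :=
  if l is Some j then count_mem j (mkseq x t) else 0%N.

Lemma occS x t l : occ x t.+1 l = (occ x t l + (l == Some (x t)))%N.
Proof.
by case: l => [j|] //; rewrite /occ mkseqS -cats1 count_cat /= addn0 eq_sym.
Qed.

Lemma sum_occ x t (L : seq (option nat)) :
  (forall a, count_mem (Some a) L <= 1)%N ->
  (\sum_(l <- L) occ x t l)%N = count (fun y => Some y \in L) (mkseq x t).
Proof.
elim: L => [|l L IH] L1; first by rewrite big_nil count_pred0.
have L1' a : (count_mem (Some a) L <= 1)%N.
  by apply: leq_trans (L1 a); rewrite /= leq_addl.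
rewrite big_cons IH //; case: l L1 => [j|] L1 /=; last first.
  by apply: eq_count => y; rewrite in_cons.
have jL : Some j \notin L.
  by apply/count_memPn; have := L1 j; rewrite /= eqxx add1n ltnS leqn0 => /eqP.
rewrite -count_predUI (@eq_count _ (predI _ _) pred0) ?count_pred0 ?addn0.
  by apply: eq_count => y; rewrite /= in_cons.
by move=> y /=; apply/negP => /andP[/eqP ->]; apply/negP.
Qed.

Definition uss_inv (m : nat) (x : nat -> nat) (t : nat) (s : uss_state) :=
  [/\ size s = m, sumn (map snd s) = t,
      (forall a, count_mem (Some a) (map fst s) <= 1)%N &
      all (fun b => b.2 <= (uss_nmin s).+1 + occ x t b.1)%N s].

Lemma uss_inv_set_nth m x t s i l c :
  uss_inv m x t s -> (i < size s)%N -> (nth (None, 0%N) s i).2 = c ->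
  (forall a, count_mem (Some a) (set_nth None (map fst s) i l) <= 1)%N ->
  (c < (uss_nmin s).+1 + occ x t.+1 l)%N ->
  uss_inv m x t.+1 (set_nth (None, 0%N) s i (l, c.+1)).
Proof.
move=> [size_s sum_s labels_s bound_s] Hi c_i labels' bound_c.
have cs : nth (None, 0%N) s i \in s by rewrite mem_nth.
have size' : size (set_nth (None, 0%N) s i (l, c.+1)) = m.
  by rewrite size_set_nth (maxn_idPr Hi).
have nmin_mono : (uss_nmin s <= uss_nmin (set_nth (None, 0%N) s i (l, c.+1)))%N.
  apply: uss_nmin_ge.
    by rewrite -size_eq0 size' -size_s -lt0n (leq_ltn_trans (leq0n i) Hi).
  apply: all_set_nth => //=; first by apply/allP => b /uss_nmin_le.
  by rewrite /= -c_i ltnW // ltnS (uss_nmin_le cs).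
split => //; rewrite ?map_set_nth //.
- rewrite sumn_set_nth_ltn ?size_map // sum_s (nth_map (None, 0%N)) // c_i /=.
  by rewrite addnS subSn ?leq_addl // addnK.
- apply: all_set_nth => //=.
    apply/allP => b bs; apply: leq_trans (allP bound_s b bs) _.
    by rewrite leq_add ?ltnS // occS leq_addr.
  by apply: leq_trans bound_c _; rewrite leq_add2r ltnS.
Qed.

Lemma truncn_mul_lt (R : realType) (u : R) n : u < 1 -> (0 < n)%N ->
  (Num.truncn (u * n%:R) < n)%N.
Proof.
case: n => [//|n] u1 _; rewrite ltnS truncn_le_nat.
by rewrite -[ltRHS]mul1r ltr_pM2r ?ltr0n.
Qed.

(* [u < 1] keeps the rank [truncn (u * k)] of the chosen bin below the number
   [k] of bins tied at the minimum. *)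
Lemma uss_inv_step (R : realType) m x t s (u v : R) : (0 < m)%N -> u < 1 ->
  uss_inv m x t s -> uss_inv m x t.+1 (uss_step s (x t) u v).
Proof.
move=> m0 u1 inv_s; have [size_s _ labels_s bound_s] := inv_s.
have s0 : s != [::] by rewrite -size_eq0 size_s -lt0n.
rewrite /uss_step; case: ifPn => tracked.
- set i := index _ _.
  have Hi : (i < size s)%N by rewrite -(size_map fst) index_mem.
  have lab_i : (nth (None, 0%N) s i).1 = Some (x t).
    by rewrite -(nth_map _ None) // nth_index.
  apply: uss_inv_set_nth => //.
    by rewrite -(nth_map _ None) // set_nth_id ?size_map.
  rewrite lab_i occS eqxx addn1 addnS ltnS -lab_i.
  exact: (allP bound_s) (mem_nth _ Hi).
- set nm := uss_nmin s; set tied := [seq _ <- _ | _].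
  have tied0 : (0 < size tied)%N.
    rewrite size_filter -has_count; apply/hasP.
    have /(nthP 0%N)[k Hk nth_k] := uss_nmin_mem s0.
    exists k; first by rewrite mem_iota add0n -(size_map snd).
    by rewrite -(nth_map _ 0%N) -?(size_map snd) ?nth_k.
  have : nth 0%N tied (Num.truncn (u * (size tied)%:R)) \in tied.
    exact/mem_nth/truncn_mul_lt.
  rewrite mem_filter mem_iota add0n => /andP[/eqP min_i Hi].
  apply: uss_inv_set_nth => //; last by rewrite ltnS leq_addr.
  case: ifP => _; last by rewrite -(nth_map _ None) // set_nth_id ?size_map.
  by apply: count_set_nth_fresh; rewrite ?size_map.
Qed.

Lemma uss_inv_run (R : realType) m x (u v : nat -> R) t : (0 < m)%N ->
  (forall s, (s < t)%N -> u s < 1) -> uss_inv m x t (uss_run m x u v t).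
Proof.
move=> m0; elim: t => [|t IH] u1 /=.
  split; rewrite ?size_nseq //; first by elim: (m).
    by move=> a; elim: (m).
  by apply/allP => b /nseqP[-> _].
apply: uss_inv_step => //; first exact: u1.
by apply: IH => s /ltnW; apply: u1.
Qed.

Lemma count_untracked_le m x t s : uss_inv m x t s ->
  (count (fun y => Some y \notin map fst s) (mkseq x t) <= m * (uss_nmin s).+1)%N.
Proof.
case=> size_s sum_s labels_s bound_s.
have tracked_rows : (t <= m * (uss_nmin s).+1
    + count (fun y => Some y \in map fst s) (mkseq x t))%N.
  rewrite -sum_occ // big_map -size_s -sum1_size big_distrl /= -big_split /=.
  rewrite -{1}sum_s sumnE big_map !big_seq.
  by apply: leq_sum => b /(allP bound_s); rewrite mul1n.
have rows_split : (count (fun y => Some y \in map fst s) (mkseq x t)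
    + count (fun y => Some y \notin map fst s) (mkseq x t))%N = t.
  exact: etrans (count_predC _ _) (size_mkseq _ _).
lia.
Qed.

(** * Items that are not labels *)

Lemma sum_count_mem (T : eqType) (r : seq T) (a : pred T) (xs : seq T) :
  uniq r ->
  (\sum_(j <- r | a j) count_mem j xs)%N = count (fun z => a z && (z \in r)) xs.
Proof.
elim: r => [|y r IH] /=.
  by move=> _; rewrite big_nil; elim: xs => //= z xs <-; rewrite andbF.
move=> /andP[yr ur]; rewrite big_cons IH //; case: ifPn => ay; last first.
  by apply: eq_count => z /=; rewrite in_cons; case: eqP => // ->; rewrite (negbTE ay).
rewrite -count_predUI (@eq_count _ (predI _ _) pred0) ?count_pred0 ?addn0.
  by apply: eq_count => z /=; rewrite in_cons; case: eqP => // ->; rewrite ay.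
by move=> z /=; apply/negP => /andP[/eqP -> /andP[_ yr']]; rewrite yr' in yr.
Qed.

Lemma count_mem_some_iota_le (L : seq (option nat)) M :
  (count (fun j => Some j \in L) (iota 0 M) <= size L)%N.
Proof.
rewrite -size_filter -(size_map Some); apply: uniq_leq_size => [|y /mapP[j]].
  by rewrite map_inj_uniq ?filter_uniq ?iota_uniq // => ? ? [].
by rewrite mem_filter => /andP[jL _] ->.
Qed.

Section DecreasingSums.
Variables (R : realType) (p : nat -> R).
Hypotheses (p_ge0 : forall j, 0 <= p j) (p_noninc : forall j, p j.+1 <= p j).

Lemma sum_nat_shift_le k M : \sum_(k.+1 <= j < M.+1) p j <= \sum_(k <= j < M) p j.
Proof.
by rewrite big_add1 /=; apply: ler_sum_nat => j _; apply: p_noninc.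
Qed.

Lemma sum_tail_le_sum_predC (a : pred nat) k M :
  (count a (iota 0 M) <= k)%N ->
  \sum_(k <= j < M) p j <= \sum_(0 <= j < M | ~~ a j) p j.
Proof.
elim: M k => [|M IH] k; first by rewrite !big_geq.
rewrite -addn1 iotaD count_cat /= add0n addn0 addn1 => le_k.
rewrite [leRHS]big_mkcond big_nat_recr //= -big_mkcond /=.
case aM: (a M) => /=; rewrite aM /= in le_k.
  rewrite addr0; case: k le_k => [|k]; first by rewrite addn1.
  rewrite addn1 ltnS => /IH le_k.
  exact: le_trans (sum_nat_shift_le k M) le_k.
rewrite addn0 in le_k; have [kM|Mk] := leqP k M; last first.
  by rewrite big_geq // addr_ge0 ?sumr_ge0.
by rewrite big_nat_recr //= lerD2r IH.
Qed.

End DecreasingSums.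

Lemma uss_sum_tail_le (R : realType) m x (u v : nat -> R) (p : nat -> R)
    (M t : nat) (eps : R) :
  (0 < m)%N -> (forall s, u s < 1) ->
  (forall j, 0 <= p j) -> (forall j, p j.+1 <= p j) -> 0 <= eps ->
  (forall j, (j < M)%N -> (p j - eps) * t%:R < (count_mem j (mkseq x t))%:R) ->
  (\sum_(m <= j < M) p j - M%:R * eps) * t%:R <= (m * (Nmin m x u v t).+1)%:R.
Proof.
move=> m0 u1 p0 p_noninc eps0 many_j.
have inv_s := @uss_inv_run R m x u v t m0 (fun s _ => u1 s).
rewrite /Nmin; set s := uss_run m x u v t in inv_s *.
have [size_s _ _ _] := inv_s.
pose untracked j := Some j \notin map fst s.
have tail_le : \sum_(m <= j < M) p j <= \sum_(0 <= j < M | untracked j) p j.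
  apply: sum_tail_le_sum_predC => //.
  by rewrite -size_s -(size_map fst); exact: count_mem_some_iota_le.
have rows_le : (\sum_(0 <= j < M | untracked j) count_mem j (mkseq x t)
    <= m * (uss_nmin s).+1)%N.
  apply: leq_trans (count_untracked_le inv_s).
  by rewrite sum_count_mem ?iota_uniq //; apply: sub_count => y /andP[].
have eps_le : \sum_(0 <= j < M | untracked j) eps <= M%:R * eps.
  rewrite -[M in leRHS]subn0 mulr_natl -sumr_const_nat big_mkcond /=.
  by apply: ler_sum => j _; case: ifP.
apply: le_trans (_ : \sum_(0 <= j < M | untracked j) (p j - eps) * t%:R <= _).
  rewrite -mulr_suml sumrB ler_wpM2r //; lra.
apply: le_trans
  (_ : (\sum_(0 <= j < M | untracked j) count_mem j (mkseq x t))%:R <= _).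
  rewrite natr_sum big_mkcond [leRHS]big_mkcond /=.
  apply: ler_sum_nat => j /andP[_ jM].
  by case: ifP => // _; exact/ltW/many_j.
by rewrite ler_nat.
Qed.

(** * A Chernoff bound *)

Lemma exists_frac_between (R : archiRealFieldType) (q pi : R) : 0 <= q -> q < pi ->
  exists a b : nat, [/\ (0 < b)%N, q * b%:R <= a%:R & a%:R < pi * b%:R].
Proof.
move=> q0 qpi; set b := (Num.truncn (pi - q)^-1).+1.
have gap : 1 < (pi - q) * b%:R.
  by rewrite -ltr_pdivrMl ?subr_gt0 // mulr1 truncnS_gt.
exists (Num.truncn (q * b%:R)).+1, b; split => //.
  exact/ltW/truncnS_gt.
have : (Num.truncn (q * b%:R))%:R <= q * b%:R by rewrite truncn_le mulr_ge0.
by rewrite -natr1; move: gap; rewrite mulrBl; lra.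
Qed.

Section ChernoffRate.
Variable R : realFieldType.

Lemma exprn_onem_ge (e : R) n : 0 <= e <= 1 -> 1 - n%:R * e <= (1 - e) ^+ n.
Proof.
case/andP=> e0 e1; elim: n => [|n IH]; first by rewrite mul0r subr0 expr0.
rewrite exprS -natr1; apply: le_trans (ler_wpM2l _ IH); last by rewrite subr_ge0.
have : 0 <= n%:R * e * e by rewrite !mulr_ge0.
by move: (n%:R : R) => z; nra.
Qed.

Lemma exprn_onem_le (e : R) n : 0 <= e <= 1 ->
  (1 - e) ^+ n <= 1 - n%:R * e + n%:R ^+ 2 * e ^+ 2.
Proof.
case/andP=> e0 e1; elim: n => [|n IH].
  by rewrite expr0 mul0r subr0 lerDl mulr_ge0 ?exprn_ge0.
rewrite exprS -natr1; apply: le_trans (ler_wpM2l _ IH) _; first by rewrite subr_ge0.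
have : 0 <= (n%:R : R) by [].
move: (n%:R : R) => z z0.
have : 0 <= z ^+ 2 * e ^+ 3 by rewrite mulr_ge0 // exprn_ge0.
have : 0 <= z * e ^+ 2 by rewrite mulr_ge0 // exprn_ge0.
by nra.
Qed.

(* At [phi = 1] both sides equal 1, and the derivative [pi * b] of the left
   side exceeds the derivative [a] of the right side. *)
Lemma exists_chernoff_base (pi : R) (a b : nat) : (0 < b)%N ->
  a%:R < pi * b%:R -> exists phi : R,
  [/\ 0 < phi, phi <= 1 & 1 - pi + pi * phi ^+ b < phi ^+ a].
Proof.
move=> b0 ab; set A := (a%:R : R); set B := (b%:R : R).
have B1 : 1 <= B by rewrite ler1n.
have B0 : 0 < B by rewrite ltr0n.
have piB : 0 < pi * B by apply: le_lt_trans ab.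
have pi0 : 0 < pi by rewrite -(pmulr_lgt0 _ B0).
set dl := pi * B - A; have dl0 : 0 < dl by rewrite subr_gt0.
set eta := dl / (2 * pi * B ^+ 2).
have eta_dl : pi * B ^+ 2 * eta = dl / 2.
  by rewrite /eta; field; rewrite !gt_eqF.
have eta0 : 0 < eta by rewrite divr_gt0 // !mulr_gt0 // exprn_gt0.
have eta1 : eta < 1.
  have : pi * B <= pi * B ^+ 2 by rewrite expr2 mulrA ler_pMr.
  have : 0 < pi * B ^+ 2 by rewrite mulr_gt0 ?exprn_gt0.
  rewrite /eta ltr_pdivrMr ?mulr_gt0 ?exprn_gt0 // mul1r /dl -mulrA.
  have : A >= 0 by [].
  lra.
exists (1 - eta); split; [lra | lra |].
have eta01 : 0 <= eta <= 1 by rewrite !ltW.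
have /(ler_wpM2l (ltW pi0)) hi := exprn_onem_le b eta01.
have lo := exprn_onem_ge a eta01.
have : 0 < dl * eta by rewrite mulr_gt0.
rewrite -/A -/B in hi lo *; move: eta_dl hi lo; rewrite /dl !expr2; nra.
Qed.

Lemma prodr_if_const (I : Type) (r : seq I) (P : pred I) (c : R) :
  \prod_(i <- r) (if P i then c else 1) = c ^+ (\sum_(i <- r) P i)%N.
Proof.
elim: r => [|i r IH]; first by rewrite !big_nil expr0.
by rewrite !big_cons IH exprD; case: (P i); rewrite ?expr1 ?expr0 ?mul1r.
Qed.

Lemma sum_ffun_bool_prod (x y : R) t :
  \sum_(g : {ffun 'I_t -> bool}) \prod_(i < t) (if g i then x else y) = (x + y) ^+ t.
Proof.
rewrite -(bigA_distr_bigA (fun _ (c : bool) => if c then x else y)) /=.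
by under eq_bigr do rewrite big_bool /=; rewrite prodr_const card_ord.
Qed.

(* Markov's inequality for [phi ^+ (b * count - a * t)] on the space of
   patterns. *)
Lemma chernoff_bool_patterns (pi phi : R) (a b t : nat) :
  0 <= pi <= 1 -> 0 < phi <= 1 ->
  \sum_(g : {ffun 'I_t -> bool} | (b * \sum_(i < t) g i <= a * t)%N)
     \prod_(i < t) (if g i then pi else 1 - pi)
  <= ((1 - pi + pi * phi ^+ b) / phi ^+ a) ^+ t.
Proof.
case/andP=> pi0 pi1 /andP[phi0 phi1].
pose W (g : {ffun 'I_t -> bool}) := \prod_(i < t) (if g i then pi else 1 - pi).
pose S (g : {ffun 'I_t -> bool}) := (\sum_(i < t) g i)%N.
have W0 g : 0 <= W g by apply: prodr_ge0 => i _; case: (g i); rewrite ?subr_ge0.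
have phi_at : 0 < phi ^+ (a * t) by rewrite exprn_gt0.
have tilt g : W g * phi ^+ (b * S g) =
    \prod_(i < t) (if g i then pi * phi ^+ b else 1 - pi).
  rewrite exprM -prodr_if_const -big_split.
  by apply: eq_bigr => i _; case: (g i) => /=; rewrite ?mulr1.
rewrite expr_div_n -exprM [_ + pi * _]addrC -sum_ffun_bool_prod mulr_suml.
apply: le_trans (_ : \sum_(g | (b * S g <= a * t)%N)
                       W g * phi ^+ (b * S g) / phi ^+ (a * t) <= _).
  apply: ler_sum => g low; rewrite -mulrA; apply: ler_peMr; first exact: W0.
  by rewrite ler_pdivlMr // mul1r; exact: ler_wiXn2l (ltW phi0) phi1 _ _ low.
under [leRHS]eq_bigr => g _ do rewrite -tilt.
rewrite [leRHS](bigID (fun g => (b * S g <= a * t)%N)) /= lerDl.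
by apply: sumr_ge0 => g _; rewrite divr_ge0 ?mulr_ge0 ?exprn_ge0 ?W0 ?ltW.
Qed.

End ChernoffRate.

(** * Item counts grow linearly almost surely *)

Lemma sum_exprn_le_inv (R : realFieldType) (r : R) k : 0 <= r < 1 ->
  \sum_(0 <= i < k) r ^+ i <= (1 - r)^-1.
Proof.
case/andP=> r0 r1.
have telescope : \sum_(0 <= i < k) r ^+ i * (1 - r) = 1 - r ^+ k.
  elim: k => [|k IH]; first by rewrite big_geq // expr0 subrr.
  by rewrite big_nat_recr //= IH exprS; ring.
rewrite -[leRHS]div1r ler_pdivlMr ?subr_gt0 // mulr_suml telescope.
by rewrite lerBlDr lerDl exprn_ge0.
Qed.

(* [g] extended by [false] beyond [t], so that patterns are indexed by row
   numbers as in [mutually_independent]. *)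
Definition nat_pattern t (g : {ffun 'I_t -> bool}) (s : nat) : bool :=
  if insub s is Some i then g i else false.

Lemma nat_pattern_ord t (g : {ffun 'I_t -> bool}) (i : 'I_t) : nat_pattern g i = g i.
Proof. by rewrite /nat_pattern valK. Qed.

Lemma measure_bigsetU_le d (T : measurableType d) (R : realFieldType)
  (mu : {measure set T -> \bar R}) (I : Type) (r : seq I) (Q : pred I)
  (E : I -> set T) : (forall i, measurable (E i)) ->
  (mu (\big[setU/set0]_(i <- r | Q i) E i) <= \sum_(i <- r | Q i) mu (E i))%E.
Proof.
move=> mE; elim: r => [|i r IH]; first by rewrite !big_nil measure0.
rewrite !big_cons; case: ifP => // _.
apply: le_trans (measureU2 _ _ _) (leeD2l _ IH) => //.
exact: bigsetU_measurable.
Qed.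

Section PatternEvents.
Context (R : realType) (d : measure_display) (T : measurableType d).
Variables (P : probability T R) (e : nat -> T -> bool).
Hypothesis measurable_e : forall s, measurable [set w | e s w].

Definition pattern_event t (g : {ffun 'I_t -> bool}) : set T :=
  \bigcap_(s in [set` iota 0 t]) [set w | e s w = nat_pattern g s].

Lemma measurable_pattern_event t (g : {ffun 'I_t -> bool}) :
  measurable (pattern_event g).
Proof.
apply: bigcap_measurableType => s _; case: (nat_pattern g s); first exact: measurable_e.
rewrite (_ : [set w | _] = ~` [set w | e s w]); first exact/measurableC/measurable_e.
by apply/seteqP; split => w /=; [move=> -> | move/negP/negbTE].
Qed.

Lemma pattern_event_self t w : pattern_event [ffun i : 'I_t => e i w] w.
Proof.
move=> s /=; rewrite mem_iota add0n => st.
by rewrite /nat_pattern insubT /= ffunE.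
Qed.

Definition low_count_event (a b t : nat) : set T :=
  \big[setU/set0]_(g : {ffun 'I_t -> bool} | (b * \sum_(i < t) g i <= a * t)%N)
    pattern_event g.

Lemma low_count_eventP (a b t : nat) w :
  (b * count (e ^~ w) (iota 0 t) <= a * t)%N -> low_count_event a b t w.
Proof.
have -> : count (e ^~ w) (iota 0 t) = (\sum_(i < t) [ffun i : 'I_t => e i w] i)%N.
  under [RHS]eq_bigr => i _ do rewrite ffunE.
  rewrite -sum1_count big_mkcond -(big_mkord xpredT (fun s => e s w : nat)).
  by rewrite /index_iota subn0; apply: eq_bigr => s _; case: (e s w).
move=> low; rewrite /low_count_event (bigD1 [ffun i : 'I_t => e i w]) //=.
by left; apply: pattern_event_self.
Qed.

Variable pi : R.
Hypothesis pi01 : 0 <= pi <= 1.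
Hypothesis P_pattern_event : forall t (g : {ffun 'I_t -> bool}),
  P (pattern_event g) = (\prod_(i < t) (if g i then pi else 1 - pi))%:E.

Lemma low_count_event_geometric (a b : nat) : (0 < b)%N -> a%:R < pi * b%:R ->
  exists2 rho : R, 0 <= rho < 1 &
    forall t, (P (low_count_event a b t) <= (rho ^+ t)%:E)%E.
Proof.
move=> b0 ab; have [phi [phi0 phi1 base]] := exists_chernoff_base b0 ab.
have [pi0 pi1] := andP pi01.
have phia0 : 0 < phi ^+ a by rewrite exprn_gt0.
exists ((1 - pi + pi * phi ^+ b) / phi ^+ a).
  apply/andP; split; last by rewrite ltr_pdivrMr // mul1r.
  apply: divr_ge0; last by rewrite exprn_ge0 // ltW.
  by rewrite addr_ge0 ?subr_ge0 // mulr_ge0 // exprn_ge0 // ltW.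
move=> t; apply: le_trans (measure_bigsetU_le P _ _ (@measurable_pattern_event t)) _.
rewrite (eq_bigr (fun g : {ffun 'I_t -> bool} =>
                   (\prod_(i < t) (if g i then pi else 1 - pi))%:E)).
  by rewrite sumEFin lee_fin chernoff_bool_patterns // phi0 phi1.
by move=> g _; exact: P_pattern_event.
Qed.

Lemma ae_count_eventually_gt (q : R) : q < pi ->
  P.-negligible [set w | ~ \forall t \near \oo,
                           q * t%:R < (count (e ^~ w) (iota 0 t))%:R].
Proof.
move=> qpi; have [q0|q0] := ltP q 0.
  apply: negligibleS (negligible_set0 P) => w /=; apply; exists 1%N => // t t1.
  by apply: lt_le_trans (ler0n _ _); rewrite pmulr_llt0 ?ltr0n.
have [a [b [b0 qb ab]]] := exists_frac_between q0 qpi.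
have [rho /andP[rho0 rho1] Prho] := low_count_event_geometric b0 ab.
have mF t : measurable (low_count_event a b t).
  by apply: bigsetU_measurable => g _; exact: measurable_pattern_event.
exists (lim_sup_set (low_count_event a b)); split.
- by apply: bigcap_measurableType => n _; apply: bigcup_measurable.
- apply: lim_sup_set_cvg0 => //.
  apply: (@le_lt_trans _ _ (\sum_(n <oo) (rho ^+ n)%:E)%E).
    by apply: lee_nneseries => [n _ _|n _]; [exact: measure_ge0 | exact: Prho].
  apply: le_lt_trans (ltry ((1 - rho)^-1)).
  apply: lime_le; first by apply: is_cvg_nneseries => n _ _; rewrite lee_fin exprn_ge0.
  by apply: nearW => k; rewrite sumEFin lee_fin sum_exprn_le_inv ?rho0.
- move=> w /= not_ev n _; apply: contrapT => not_lim; apply: not_ev.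
  exists n => // t nt; apply: contrapT => /negP; rewrite -leNgt => low.
  apply: not_lim; exists t => //; apply: low_count_eventP.
  rewrite -(ler_nat R) !natrM; apply: le_trans (_ : b%:R * (q * t%:R) <= _).
    by rewrite ler_wpM2l.
  by rewrite mulrA [b%:R * q]mulrC ler_wpM2r.
Qed.

End PatternEvents.

Section Stream.
Context (R : realType) (d : measure_display) (T : measurableType d).
Variable P : probability T R.

Lemma uniform01_lt1 (W : T -> R) : uniform01 P W ->
  P.-negligible (W @^-1` `[1, +oo[%classic).
Proof.
case=> mW PW; have m1 : measurable (`[1, +oo[%classic : set R) by exact: measurable_itv.
apply/negligibleP; first by rewrite -[X in measurable X]setTI; exact: mW.
rewrite [LHS](PW _ m1) (_ : _ `&` _ = [set 1]); first exact: lebesgue_measure_set1.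
apply/seteqP; split => y /=; rewrite !in_itv /= ?andbT.
  by move=> [y1 /andP[_ y1']]; apply/eqP; rewrite eq_le y1 y1'.
by move=> ->; rewrite lexx ler01.
Qed.

Lemma pattern_event_item (X : nat -> T -> nat) (U V : nat -> T -> R)
    (pj : R) j :
  (forall t, measurable (X t @^-1` [set j])) ->
  (forall t, P (X t @^-1` [set j]) = pj%:E) ->
  mutually_independent P X U V ->
  forall t (g : {ffun 'I_t -> bool}),
    P (pattern_event (fun s w => X s w == j) g)
    = (\prod_(i < t) (if g i then pj else 1 - pj))%:E.
Proof.
move=> Xm Xp indep t g.
pose A s := if nat_pattern g s then [set j] else ~` [set j].
have := indep (iota 0 t) A (fun=> setT) (fun=> setT) (iota_uniq 0 t)
  (fun=> measurableT) (fun=> measurableT).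
rewrite (_ : \bigcap_(s in _) _ = pattern_event (fun s w => X s w == j) g).
  move=> ->; rewrite -prodEFin.
  under [RHS]eq_bigr => i _ do rewrite -nat_pattern_ord.
  rewrite -(big_mkord xpredT (fun s => (if nat_pattern g s then pj else 1 - pj)%:E)).
  rewrite /index_iota subn0; apply: eq_bigr => s _.
  rewrite !preimage_setT probability_setT !mule1 /A; case: nat_pattern => //.
  by rewrite -preimage_setC probability_setC // Xp EFinB.
apply: eq_bigcapr => s _; rewrite !preimage_setT !setIT /A.
apply/seteqP; split => w /=; case: nat_pattern => /=;
  by [move/eqP | move/eqP/negbTE | move/eqP | move/negbT/eqP].
Qed.

Lemma ae_item_count_gt (X : nat -> T -> nat) (U V : nat -> T -> R)
    (p : nat -> R) (eps : R) :
  (forall t j, measurable (X t @^-1` [set j])) ->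
  (forall t j, P (X t @^-1` [set j]) = (p j)%:E) ->
  mutually_independent P X U V -> 0 < eps ->
  P.-negligible (\bigcup_j [set w | ~ \forall t \near \oo,
    (p j - eps) * t%:R < (count_mem j (mkseq (X ^~ w) t))%:R]).
Proof.
move=> Xm Xp indep eps0; apply: negligible_bigcup => j.
have p0 : 0 <= p j by rewrite -lee_fin -(Xp 0%N) measure_ge0.
have p01 : 0 <= p j <= 1.
  by rewrite p0 -lee_fin -(Xp 0%N) probability_le1.
have mXj s : measurable [set w | X s w == j].
  rewrite (_ : [set w | _] = X s @^-1` [set j]) ?Xm //.
  by apply/seteqP; split=> w /eqP.
have := pattern_event_item (fun t => Xm t j) (fun t => Xp t j) indep.
move=> /(ae_count_eventually_gt mXj p01)/(_ (p j - eps)).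
rewrite gtrBl => /(_ eps0); apply: negligibleS => w /= not_ev ev; apply: not_ev.
by apply: filterS ev => t; rewrite count_map.
Qed.

End Stream.

Lemma exists_partial_sum_gt (R : realType) (p : nat -> R) m (a : R) :
  (forall j, 0 <= p j) -> (a%:E < \sum_(m <= j <oo) (p j)%:E)%E ->
  exists M, a < \sum_(m <= j < M) p j.
Proof.
move=> p0 lt_a; apply: contrapT => /forallNP le_a; move: lt_a; apply/negP.
rewrite -leNgt; apply: lime_le.
  by apply: is_cvg_nneseries => n _ _; rewrite lee_fin.
by apply: nearW => k; rewrite sumEFin lee_fin leNgt; apply/negP/le_a.
Qed.

Lemma eventually_div_lt_nat (R : realType) (a c : R) (m : nat) (N : nat -> nat) :
  (0 < m)%N -> a < c ->
  (\forall t \near \oo, c * t%:R <= (m * (N t).+1)%:R) ->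
  \forall t \near \oo, a * t%:R / m%:R < (N t)%:R.
Proof.
move=> m0 ac; apply: filterS2 (nbhs_infty_gtr (m%:R / (c - a))) => t large bound.
rewrite ltr_pdivrMr ?subr_gt0 // in large.
rewrite natrM -natr1 in bound; rewrite ltr_pdivrMr ?ltr0n //; nra.
Qed.

Theorem lemma1 (R : realType) (d : measure_display) (T : measurableType d)
  (P : probability T R) (m : nat) (p : nat -> R)
  (X : nat -> T -> nat) (U V : nat -> T -> R) :
  (0 < m)%N ->
  (forall j, 0 <= p j) ->
  (forall j, p j.+1 <= p j) ->
  (forall t j, measurable (X t @^-1` [set j])) ->
  (forall t j, P (X t @^-1` [set j]) = (p j)%:E) ->
  (forall t, uniform01 P (U t)) ->
  (forall t, uniform01 P (V t)) ->
  mutually_independent P X U V ->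
  forall alpha' : R, (alpha'%:E < \sum_(m <= j <oo) (p j)%:E)%E ->
  {ae P, forall w, exists T0 : nat, forall t : nat, (T0 <= t)%N ->
     alpha' * t%:R / m%:R < (Nmin m (X ^~ w) (U ^~ w) (V ^~ w) t)%:R}.
Proof.
(* The bound holds whatever labels the bins carry. *)
move=> m0 p0 p_noninc Xm Xp Uu _ indep alpha' lt_alpha.
have [M lt_beta] := exists_partial_sum_gt p0 lt_alpha.
set beta := \sum_(m <= j < M) p j in lt_beta *.
set eps := (beta - alpha') / M.+1%:R.
have eps0 : 0 < eps by rewrite divr_gt0 ?subr_gt0.
have lt_alpha_c : alpha' < beta - M%:R * eps.
  suff : M%:R * eps < beta - alpha' by lra.
  by rewrite /eps mulrA ltr_pdivrMr // mulrC ltr_pM2l ?subr_gt0 // ltr_nat.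
have bad_u := negligible_bigcup (fun t => uniform01_lt1 (Uu t)).
have bad_x := ae_item_count_gt Xm Xp indep eps0.
apply: negligibleS (negligibleU bad_u bad_x) => w /= not_goal.
apply: contrapT => not_bad; apply: not_goal.
have u1 s : U s w < 1.
  rewrite ltNge; apply/negP => U1; apply: not_bad; left.
  by exists s; rewrite //= in_itv /= U1.
have counts : \forall t \near \oo, forall j : 'I_M,
    (p j - eps) * t%:R < (count_mem (j : nat) (mkseq (X ^~ w) t))%:R.
  apply: filter_forall => j; apply: contrapT => not_ev.
  by apply: not_bad; right; exists j.
have tail : \forall t \near \oo, (beta - M%:R * eps) * t%:R
    <= (m * (Nmin m (X ^~ w) (U ^~ w) (V ^~ w) t).+1)%:R.
  apply: filterS counts => t many_j.
  by apply: uss_sum_tail_le; rewrite ?ltW // => j jM; exact: many_j (Ordinal jM).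
have [T0 _ HT0] := eventually_div_lt_nat m0 lt_alpha_c tail.
by exists T0.
Qed.
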